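(* Let $(\mathcal P,\mathcal M,p)$ be an operational theory. Let $M_1,\dots,M_9\in\mathcal M$ be four-outcome measurements, with outcomes of $M_i$ labelled $k\in\{1,2,3,4\}$, and fix a bijection between the four outcomes of $M_i$ and the four labels in the $i$-th of the following sets: $L_1=\{1,2,3,4\}$, $L_2=\{4,5,6,7\}$, $L_3=\{7,8,9,10\}$, $L_4=\{10,11,12,13\}$, $L_5=\{13,14,15,16\}$, $L_6=\{16,17,18,1\}$, $L_7=\{18,2,9,11\}$, $L_8=\{3,5,12,14\}$, $L_9=\{6,8,15,17\}$ (each label $\kappa\in\{1,\dots,18\}$ occurs in exactly two of these sets). Suppose the eighteen operational equivalences $[k|M_i]\simeq[k'|M_{i'}]$ hold whenever outcome $k$ of $M_i$ and outcome $k'$ of $M_{i'}$ ($i\ne i'$) carry the same label. Let $P_{i,k}\in\mathcal P$, $i\in\{1,\dots,9\}$, $k\in\{1,\dots,4\}$, be thirty-six preparations, and let $P_i^{(\mathrm{ave})}$ be the preparation obtained by sampling $k$ uniformly from $\{1,2,3,4\}$ and implementing $P_{i,k}$; suppose $P_1^{(\mathrm{ave})}\simeq P_2^{(\mathrm{ave})}\simeq\cdots\simeq P_9^{(\mathrm{ave})}$. If the operational theory admits a universally noncontextual ontological model, then $$A\equiv\frac1{36}\sum_{i=1}^9\sum_{k=1}^4 p(k|M_i,P_{i,k})\le\frac56.$$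
   Context: An operational theory $(\mathcal P,\mathcal M,p)$ consists of preparations $\mathcal P$, measurements $\mathcal M$ (each $M$ with a finite outcome set $\mathcal K_M$) and probabilities $p(k|M,P)$ forming a distribution over $\mathcal K_M$. An ontological model $(\Lambda,\mu,\xi)$ consists of a set $\Lambda$ of ontic states, a probability distribution $\mu(\cdot|P)$ on $\Lambda$ for each $P$, and response functions $\xi(k|M,\lambda)\in[0,1]$ with $\sum_k\xi(k|M,\lambda)=1$, such that $p(k|M,P)=\sum_\lambda\xi(k|M,\lambda)\mu(\lambda|P)$. A preparation implemented by sampling $P_j$ with probability $w_j$ is represented by $\sum_j w_j\mu(\cdot|P_j)$. $[k|M]$ denotes the event of outcome $k$ of $M$. Events are operationally equivalent, $[k|M]\simeq[k'|M']$, if $p(k|M,P)=p(k'|M',P)$ for all $P\in\mathcal P$; preparations are operationally equivalent, $P\simeq P'$, if $p(k|M,P)=p(k|M,P')$ for all $M,k$. The model is measurement noncontextual if $[k|M]\simeq[k'|M']$ implies $\xi(k|M,\lambda)=\xi(k'|M',\lambda)$ for all $\lambda$, preparation noncontextual if $P\simeq P'$ implies $\mu(\cdot|P)=\mu(\cdot|P')$, and universally noncontextual if both hold. Outcome determinism is not assumed. *)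

From HB Require Import structures.
From mathcomp Require Import all_boot all_order all_algebra.
From mathcomp Require Import classical_sets boolp reals ereal esum.
Import Order.TTheory GRing.Theory Num.Theory.
Local Open Scope ring_scope.

Section OpTheory.
Variable R : realType.
Variables (Prep Meas : Type) (Out : Meas -> finType)
          (p : forall M : Meas, Out M -> Prep -> R).

Definition op_theory : Prop :=
  (forall M k P, 0 <= p M k P) /\ (forall M P, \sum_(k : Out M) p M k P = 1).

Definition event_equiv (M : Meas) (k : Out M) (M' : Meas) (k' : Out M') : Prop :=
  forall P : Prep, p M k P = p M' k' P.

Definition prep_equiv (P P' : Prep) : Prop :=
  forall (M : Meas) (k : Out M), p M k P = p M k P'.

Definition ont_model (L : choiceType) (mu : Prep -> L -> R)
    (xi : forall M : Meas, Out M -> L -> R) : Prop :=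
  [/\ (forall P l, 0 <= mu P l),
      (forall P, (\esum_(l in [set: L]) (mu P l)%:E)%E = 1%E),
      (forall M k l, 0 <= xi M k l <= 1),
      (forall M l, \sum_(k : Out M) xi M k l = 1) &
      (forall M k P, (\esum_(l in [set: L]) (xi M k l * mu P l)%:E)%E = (p M k P)%:E)].

Definition meas_noncontextual (L : choiceType)
    (xi : forall M : Meas, Out M -> L -> R) : Prop :=
  forall M k M' k', event_equiv M k M' k' -> forall l, xi M k l = xi M' k' l.

Definition prep_noncontextual (L : choiceType) (mu : Prep -> L -> R) : Prop :=
  forall P P', prep_equiv P P' -> mu P = mu P'.

Definition univ_noncontextual (L : choiceType) (mu : Prep -> L -> R)
    (xi : forall M : Meas, Out M -> L -> R) : Prop :=
  meas_noncontextual L xi /\ prep_noncontextual L mu.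

End OpTheory.

Arguments op_theory {R Prep Meas Out} p.
Arguments event_equiv {R Prep Meas Out} p M k M' k'.
Arguments prep_equiv {R Prep Meas Out} p P P'.
Arguments ont_model {R Prep Meas Out} p L mu xi.
Arguments meas_noncontextual {R Prep Meas Out} p L xi.
Arguments prep_noncontextual {R Prep Meas Out} p L mu.
Arguments univ_noncontextual {R Prep Meas Out} p L mu xi.

(* The label sets L_1..L_9 (labels 1..18 encoded as 0..17 in 'I_18). *)
Definition Lsets : seq (seq nat) :=
  [:: [:: 1; 2; 3; 4]; [:: 4; 5; 6; 7]; [:: 7; 8; 9; 10]; [:: 10; 11; 12; 13];
      [:: 13; 14; 15; 16]; [:: 16; 17; 18; 1]; [:: 18; 2; 9; 11];
      [:: 3; 5; 12; 14]; [:: 6; 8; 15; 17]]%N.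

Definition lbl (kappa : 'I_18) : nat := kappa.+1.

(* the i-th label set, i : 'I_9 (i = 0 is L_1) *)
Definition Lset (i : 'I_9) : seq nat := nth [::] Lsets i.

From HB Require Import structures.
From mathcomp Require Import all_boot all_order all_algebra.
From mathcomp Require Import reals lra.

(* Fix an ontic state l. Measurement noncontextuality turns the response
   functions xi(.|M_i,l) into one weight x on the eighteen labels, with sum 1
   over each of the nine contexts L_i. Every label lies in exactly two contexts,
   so x is a fractional perfect matching of a graph with nine (an odd number of)
   vertices. For a choice c of one label per context, call a context covered
   when its label is also chosen by the other context containing it. Covered
   contexts come in pairs, so an odd number u of contexts is uncovered, and the
   slack 9 - sum_i x(c_i) = sum_k (2 - #c^-1(k)) x_k is at least u/2; when
   u = 1, comparing the uncovered context w with the covered pair next to it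
   still gives 3/2. Hence sum_i max_k xi(k|M_i,l) <= 15/2. Preparation
   noncontextuality makes all mu(.|P_i^ave) one distribution nu, so the
   integrand of 36 A is at most 4 * 15/2 * nu(l), and A <= 30/36. *)

Import Order.TTheory GRing.Theory Num.Theory.
Local Open Scope ring_scope.

Lemma ler_sum_subset (R : numDomainType) (T : finType) (A B : {pred T}) (F : T -> R) :
  {subset A <= B} -> (forall t, t \in B -> 0 <= F t) ->
  \sum_(t in A) F t <= \sum_(t in B) F t.
Proof.
move=> AB F_ge0; rewrite [X in _ <= X](bigID (mem A)) /=.
rewrite [X in _ <= X + _](eq_bigl (mem A)) => [|t]; last by rewrite andb_idl //; apply: AB.
by rewrite lerDl sumr_ge0 // => t /andP[/F_ge0].
Qed.

Lemma sum_mul_le_argmax (R : realDomainType) (T : finType) (t0 : T) (a w : T -> R) :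
  (forall t, 0 <= w t) -> \sum_t a t * w t <= a [arg max_(t > t0) a t]%O * \sum_t w t.
Proof.
move=> w_ge0; rewrite mulr_sumr; apply: ler_sum => t _; apply: ler_wpM2r => //.
by case: arg_maxP => // t1 _; apply.
Qed.

Lemma card2_other {T : finType} {A : {set T}} {a : T} :
  #|A| = 2%N -> a \in A -> exists2 b, b != a & b \in A.
Proof.
move=> A2 aA; have /cards1P[b Ab] : #|A :\ a| == 1%N.
  by move: A2; rewrite (cardsD1 a) aA add1n => -[->].
have : b \in A :\ a by rewrite Ab set11.
by rewrite in_setD1 => /andP[ba bA]; exists b.
Qed.

Section ChoiceFunctions.
Variables (I K : finType) (c : I -> K).

Definition chosen (k : K) : nat := #|[set i | c i == k]|.

Definition covered (i : I) : bool := chosen (c i) == 2%N.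

Lemma sum_choice (V : nmodType) (A : {pred K}) (F : K -> V) :
  \sum_(i | c i \in A) F (c i) = \sum_(k in A) F k *+ chosen k.
Proof.
rewrite (partition_big c (mem A)) //=; apply: eq_bigr => k kA.
rewrite (eq_bigr (fun=> F k)) => [|i /andP[_ /eqP -> //]].
rewrite sumr_const /chosen cardsE; congr (_ *+ _); apply: eq_card => i.
by rewrite !unfold_in /= andb_idl // => /eqP ->.
Qed.

Variable ctx : I -> {set K}.
Hypothesis c_in : forall i, c i \in ctx i.
Hypothesis two_ctx : forall k, #|[set i | k \in ctx i]| = 2%N.

Lemma chosen_sub k : [set i | c i == k] \subset [set i | k \in ctx i].
Proof. by apply/subsetP => i; rewrite !inE => /eqP <-. Qed.

Lemma chosen_le2 k : (chosen k <= 2)%N.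
Proof. by rewrite -(two_ctx k) subset_leq_card ?chosen_sub. Qed.

Lemma chosen2_ctx k : chosen k = 2%N -> [set i | c i == k] = [set i | k \in ctx i].
Proof. by move=> ck2; apply/eqP; rewrite eqEcard chosen_sub two_ctx -ck2 /=. Qed.

Lemma covered_choice i j : covered j -> c j \in ctx i -> c i = c j.
Proof.
move=> /eqP /chosen2_ctx ctx_eq kj.
have : i \in [set i0 | c j \in ctx i0] by rewrite inE.
by rewrite -ctx_eq inE => /eqP.
Qed.

Lemma odd_card_uncovered : odd #|I| -> odd #|[set i | ~~ covered i]|.
Proof.
have even_covered : ~~ odd #|[set i | covered i]|.
  rewrite -sum1_card (eq_bigl (fun i => c i \in [pred k | chosen k == 2%N])) => [|i];
    last by rewrite inE.
  rewrite (sum_choice _ _ (fun=> 1%N)) (eq_bigr (fun=> 2%N)) => [|k /eqP ->//].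
  by rewrite sum_nat_const oddM andbF.
have -> : [set i | ~~ covered i] = ~: [set i | covered i].
  by apply/setP => i; rewrite !inE.
by rewrite -(cardsC [set i | covered i]) oddD (negPf even_covered).
Qed.

Variables (R : realFieldType) (x : K -> R).
Hypotheses (x_ge0 : forall k, 0 <= x k) (x_ctx : forall i, \sum_(k in ctx i) x k = 1).

Lemma sum_ctx_incidence (U : {pred I}) :
  \sum_(i in U) \sum_(k in ctx i) x k = \sum_k x k *+ #|[set i in U | k \in ctx i]|.
Proof.
rewrite (exchange_big_dep predT) //=; apply: eq_bigr => k _.
by rewrite -sumr_const; apply: eq_bigl => i; rewrite inE.
Qed.

Lemma card_sum_ctx (U : {pred I}) : #|U|%:R = \sum_(i in U) \sum_(k in ctx i) x k :> R.
Proof. by rewrite -sumr_const; apply: eq_bigr. Qed.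

Definition slack : R := \sum_k x k *+ (2 - chosen k).

Lemma sum_choice_add_slack : \sum_i x (c i) + slack = #|I|%:R.
Proof.
rewrite -[\sum_i _]/(\sum_(i | c i \in predT) x (c i)) sum_choice /slack -big_split /=.
under eq_bigr => k _ do rewrite -mulrnDr (subnKC (chosen_le2 k)).
rewrite card_sum_ctx sum_ctx_incidence; apply: eq_bigr => k _.
by rewrite -(two_ctx k); congr (_ *+ #|_|); apply/setP => i; rewrite !inE.
Qed.

Lemma card_uncovered_ctx_le k :
  (#|[set i in [set i | ~~ covered i] | k \in ctx i]| <= (2 - chosen k) * 2)%N.
Proof.
have [ck2|ck] := eqVneq (chosen k) 2%N.
  suff -> : #|[set i in [set i | ~~ covered i] | k \in ctx i]| = 0%N by [].
  apply: eq_card0 => i; rewrite !inE; apply/negbTE/andP => -[/negP ncov kci]; apply: ncov.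
  have : i \in [set i | k \in ctx i] by rewrite inE.
  by rewrite -chosen2_ctx // inE => /eqP ci; rewrite /covered ci ck2.
have ck1 : (chosen k <= 1)%N by have := chosen_le2 k; rewrite leq_eqVlt (negPf ck).
apply: (@leq_trans 2); last by rewrite leq_pmull // subn_gt0.
by rewrite -(two_ctx k) subset_leq_card //; apply/subsetP => i; rewrite !inE => /andP[].
Qed.

Lemma slack_ge_uncovered : #|[set i | ~~ covered i]|%:R / 2 <= slack.
Proof.
rewrite card_sum_ctx sum_ctx_incidence ler_pdivrMr; last exact: ltr0Sn.
rewrite /slack mulr_suml; apply: ler_sum => k _; rewrite mulr_natr -mulrnA.
exact: ler_wpMn2l (x_ge0 k) _ _ (card_uncovered_ctx_le k).
Qed.

Lemma x_le1 i k : k \in ctx i -> x k <= 1.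
Proof. by move=> kci; rewrite -(x_ctx i) (bigD1 k) //= lerDl sumr_ge0. Qed.

Lemma slack_sum_deficit : slack = \sum_i (1 - x (c i)).
Proof.
apply: (addrI (\sum_i x (c i))); rewrite sum_choice_add_slack sumrB addrC subrK.
by rewrite sumr_const.
Qed.

Section OneUncovered.
Variable w : I.
Hypothesis uncovered_w : [set i | ~~ covered i] = [set w].

Lemma coveredE i : covered i = (i != w).
Proof. by rewrite -in_set1 -uncovered_w inE negbK. Qed.

Lemma choice_in_ctx_w j : (c j \in ctx w) = (j == w).
Proof.
apply/idP/eqP => [cjw|->]; last exact: c_in.
apply/eqP; apply: contraTT (_ : ~~ covered w) => [jw|]; last by rewrite coveredE eqxx.
have cov_j : covered j by rewrite coveredE.
by rewrite negbK /covered (covered_choice w j cov_j cjw).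
Qed.

Lemma slack_ge_2B : 2 - x (c w) <= slack.
Proof.
have -> : 2 - x (c w) = \sum_(k in ctx w) x k *+ (2 - chosen k).
  under eq_bigr => k _ do rewrite (mulrnBr _ (chosen_le2 k)).
  rewrite sumrB sumrMnl x_ctx -sum_choice (big_pred1 w) // => i.
  exact: choice_in_ctx_w.
apply: (@ler_sum_subset _ _ (mem (ctx w)) predT) => // k _.
exact: mulrn_wge0.
Qed.

Lemma slack_ge_1D : 1 + x (c w) <= slack.
Proof.
have covered_w : ~~ covered w by rewrite coveredE eqxx.
have w_ctx : w \in [set i | c w \in ctx i] by rewrite inE c_in.
have [z zw czw] := card2_other (two_ctx (c w)) w_ctx.
have covered_z : covered z by rewrite coveredE.
have z_chosen : z \in [set j | c j == c z] by rewrite inE.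
have [z' z'z cz'] := card2_other (eqP covered_z) z_chosen.
rewrite inE in czw; rewrite inE in cz'.
(* z is the other context containing c w and z' its partner: the deficits
   1 - x (c i) at w, z and z' already add up to 1 + x (c w). *)
have cwz : c w != c z.
  by apply: contraNneq covered_w; rewrite /covered => ->; exact: covered_z.
have z'w : z' != w by apply: contraNneq cwz => z'_eq_w; rewrite -z'_eq_w.
have pair_le1 : x (c w) + x (c z) <= 1.
  rewrite -(x_ctx z) -(big_set1 +%R (c z) x) -big_setU1 ?inE //=.
  apply: ler_sum_subset => [k|k _]; last exact: x_ge0.
  by rewrite !inE => /orP[] /eqP ->.
rewrite slack_sum_deficit (bigD1 w) // (bigD1 z) // (bigD1 z') /=; last first.
  by rewrite z'z z'w.
rewrite (eqP cz'); have : 0 <= \sum_(i | (i != w) && (i != z) && (i != z')) (1 - x (c i)).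
  by apply: sumr_ge0 => i _; rewrite subr_ge0 (x_le1 _ _ (c_in i)).
lra.
Qed.

Lemma slack_ge_3half : 3 / 2 <= slack.
Proof. by have := slack_ge_2B; have := slack_ge_1D; lra. Qed.
End OneUncovered.

Theorem sum_choice_le : odd #|I| -> \sum_i x (c i) <= #|I|%:R - 3 / 2.
Proof.
move=> /odd_card_uncovered odd_u.
suff : 3 / 2 <= slack by have := sum_choice_add_slack; lra.
have [u_ge3|u_lt3] := leqP 3 #|[set i | ~~ covered i]|.
  have := slack_ge_uncovered; rewrite -(ler_nat R) in u_ge3; lra.
have /cards1P[w uw] : #|[set i | ~~ covered i]| == 1%N.
  by move: odd_u u_lt3; case: #|_| => [|[|[|]]].
exact: slack_ge_3half uw.
Qed.
End ChoiceFunctions.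

Lemma card_ord_count n (P : pred nat) : #|[set i : 'I_n | P i]| = count P (iota 0 n).
Proof. by rewrite cardsE -sum1_card -(big_mkord P (fun=> 1%N)) sum1_count /index_iota subn0. Qed.

Lemma mem_iota_ord {n} (i : 'I_n) : (i : nat) \in iota 0 n.
Proof. by rewrite mem_iota add0n leq0n ltn_ord. Qed.

Definition Lctx (i : 'I_9) : {set 'I_18} := [set k | lbl k \in Lset i].

Lemma Lctx_two k : #|[set i | k \in Lctx i]| = 2%N.
Proof.
have -> : [set i | k \in Lctx i] = [set i : 'I_9 | k.+1 \in nth [::] Lsets i].
  by apply/setP => i; rewrite !inE.
rewrite (card_ord_count 9 (fun i => k.+1 \in nth [::] Lsets i)); apply/eqP.
have /allP := (isT : all (fun l => count (fun i => l.+1 \in nth [::] Lsets i) (iota 0 9) == 2)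
                         (iota 0 18)).
by move/(_ _ (mem_iota_ord k)).
Qed.

Lemma card_Lctx i : #|Lctx i| = 4%N.
Proof.
have -> : Lctx i = [set k : 'I_18 | k.+1 \in nth [::] Lsets i].
  by apply/setP => k; rewrite !inE.
rewrite (card_ord_count 18 (fun l => l.+1 \in nth [::] Lsets i)); apply/eqP.
have /allP := (isT : all (fun i => count (fun l => l.+1 \in nth [::] Lsets i) (iota 0 18) == 4)
                         (iota 0 9)).
by move/(_ _ (mem_iota_ord i)).
Qed.

Section NoncontextualResponses.
Context {R : realType} {Prep Meas : Type} {Out : Meas -> finType}.
Context {p : forall N : Meas, Out N -> Prep -> R}.
Context {M : 'I_9 -> Meas} {lab : forall i : 'I_9, Out (M i) -> 'I_18}.
Hypothesis card_Out : forall i, #|Out (M i)| = 4%N.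
Hypothesis lab_inj : forall i, injective (lab i).
Hypothesis lab_in : forall i (o : Out (M i)), lbl (lab i o) \in Lset i.
Hypothesis lab_equiv : forall (i i' : 'I_9) (o : Out (M i)) (o' : Out (M i')),
  i != i' -> lab i o = lab i' o' -> event_equiv p (M i) o (M i') o'.
Context {L : choiceType} {xi : forall N : Meas, Out N -> L -> R}.
Hypothesis xi01 : forall N o l, 0 <= xi N o l <= 1.
Hypothesis xi_sum : forall N l, \sum_(o : Out N) xi N o l = 1.
Hypothesis xi_nc : meas_noncontextual p L xi.

Definition label_response (l : L) (k : 'I_18) : R :=
  if [pick io : {i : 'I_9 & Out (M i)} | lab (tag io) (tagged io) == k] is Some io
  then xi (M (tag io)) (tagged io) l else 0.

Lemma label_responseE l i (o : Out (M i)) : label_response l (lab i o) = xi (M i) o l.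
Proof.
rewrite /label_response; case: pickP => [[i' o'] /= /eqP lab_eq|]; last first.
  by move/(_ (Tagged (fun i => Out (M i)) o)); rewrite eqxx.
have [ii'|ii'] := eqVneq i' i; last exact: xi_nc _ _ _ _ (lab_equiv _ _ _ _ ii' lab_eq) l.
by subst i'; rewrite (lab_inj _ _ _ lab_eq).
Qed.

Lemma label_response_ge0 l k : 0 <= label_response l k.
Proof.
by rewrite /label_response; case: pickP => // io _; case/andP: (xi01 _ (tagged io) l).
Qed.

Lemma Lctx_image i : Lctx i = lab i @: [set: Out (M i)].
Proof.
apply/esym/eqP; rewrite eqEcard (card_imset _ (lab_inj i)) cardsT card_Out card_Lctx leqnn andbT.
by apply/subsetP => _ /imsetP[o _ ->]; rewrite inE lab_in.
Qed.

Lemma sum_label_response l i : \sum_(k in Lctx i) label_response l k = 1.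
Proof.
rewrite Lctx_image big_imset /=; last by move=> o o' _ _; apply: lab_inj.
rewrite -(xi_sum (M i) l); apply: eq_big => [o|o _]; first by rewrite inE.
exact: label_responseE.
Qed.

Lemma sum_response_choice_le l (o : forall i, Out (M i)) :
  \sum_i xi (M i) (o i) l <= 15 / 2.
Proof.
have o_in i : lab i (o i) \in Lctx i by rewrite inE lab_in.
have := sum_choice_le _ _ _ _ o_in Lctx_two _ _ (label_response_ge0 l) (sum_label_response l).
rewrite card_ord; under eq_bigr do rewrite label_responseE.
by move/(_ isT); lra.
Qed.

Lemma mixture_response_le l {T : finType} (t0 : T) (out : forall i, T -> Out (M i))
    (w : 'I_9 -> T -> R) (W : R) :
  (forall i t, 0 <= w i t) -> (forall i, \sum_t w i t = W) ->
  \sum_i \sum_t xi (M i) (out i t) l * w i t <= 15 / 2 * W.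
Proof.
move=> w_ge0 w_sum; pose best i := [arg max_(t > t0) xi (M i) (out i t) l]%O.
apply: (@le_trans _ _ (\sum_i xi (M i) (out i (best i)) l * W)).
  by apply: ler_sum => i _; rewrite -(w_sum i); apply: sum_mul_le_argmax.
have W_ge0 : 0 <= W by rewrite -(w_sum ord0) sumr_ge0.
by rewrite -mulr_suml ler_wpM2r // (sum_response_choice_le l (fun i => out i (best i))).
Qed.

End NoncontextualResponses.

(* Imported only now: classical_sets shadows subsetP, set0 and in_set1 of finset. *)
From mathcomp Require Import classical_sets ereal esum.

Lemma esum_sum_le_natmul {R : realType} {L : choiceType} {J : finType}
    {F : J -> L -> R} {g : L -> R} {n : nat} :
  (forall j l, 0 <= F j l) -> (forall l, 0 <= g l) ->
  (\esum_(l in [set: L]) (g l)%:E = 1)%E ->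
  (forall l, \sum_j F j l <= g l *+ n) ->
  (\sum_j \esum_(l in [set: L]) (F j l)%:E <= n%:R%:E)%E.
Proof.
move=> F_ge0 g_ge0 g_sum F_le.
rewrite -esum_sum; last by move=> l j _ _; rewrite lee_fin.
have -> : n%:R%:E = (\sum_(j < n) \esum_(l in [set: L]) (g l)%:E)%E.
  by under eq_bigr do rewrite g_sum; rewrite sumEFin sumr_const card_ord.
rewrite -esum_sum; last by move=> l j _ _; rewrite lee_fin.
apply: le_esum => l _; rewrite !sumEFin lee_fin sumr_const card_ord.
exact: F_le.
Qed.

Theorem mainTheorem6 (R : realType) (Prep Meas : Type) (Out : Meas -> finType)
    (p : forall M : Meas, Out M -> Prep -> R)
    (hp : op_theory p)
    (M : 'I_9 -> Meas)
    (* outcome k in {1,..,4} of M_i (k encoded in 'I_4) *)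
    (out : forall i : 'I_9, 'I_4 -> Out (M i))
    (out_bij : forall i, bijective (out i))
    (* the fixed bijection between outcomes of M_i and the labels of L_i *)
    (lab : forall i : 'I_9, Out (M i) -> 'I_18)
    (lab_inj : forall i, injective (lab i))
    (lab_in : forall i (o : Out (M i)), lbl (lab i o) \in Lset i)
    (* the eighteen operational equivalences *)
    (hequiv : forall (i i' : 'I_9) (o : Out (M i)) (o' : Out (M i')),
        i != i' -> lab i o = lab i' o' -> event_equiv p (M i) o (M i') o')
    (P : 'I_9 -> 'I_4 -> Prep)
    (Pave : 'I_9 -> Prep)
    (* P_i^(ave) is implemented by sampling k uniformly and preparing P_{i,k} *)
    (hPave_op : forall i (N : Meas) (o : Out N),
        p N o (Pave i) = 4^-1 * \sum_(k < 4) p N o (P i k))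
    (hPave_eq : forall i j : 'I_9, prep_equiv p (Pave i) (Pave j))
    (hUNC : exists (L : choiceType) (mu : Prep -> L -> R)
              (xi : forall N : Meas, Out N -> L -> R),
        [/\ ont_model p L mu xi, univ_noncontextual p L mu xi &
            (* the model represents the mixture P_i^(ave) as the mixture of
               the representations of the P_{i,k} *)
            forall i l, mu (Pave i) l = 4^-1 * \sum_(k < 4) mu (P i k) l]) :
  36^-1 * \sum_(i < 9) \sum_(k < 4) p (M i) (out i k) (P i k) <= 5 / 6 :> R.
Proof.
case: hUNC => L [mu [xi [[mu_ge0 mu_sum xi01 xi_sum p_model] [xi_nc mu_nc] mu_mix]]].
pose nu := mu (Pave ord0).
have mu_P i l : \sum_(k < 4) mu (P i k) l = 4 * nu l.
  by rewrite /nu -(mu_nc _ _ (hPave_eq i ord0)) mu_mix mulVKf.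
have card_Out i : #|Out (M i)| = 4%N by rewrite -(bij_eq_card (out_bij i)) card_ord.
have pointwise l :
    \sum_(ik : 'I_9 * 'I_4) xi (M ik.1) (out ik.1 ik.2) l * mu (P ik.1 ik.2) l <= nu l *+ 30.
  rewrite -(pair_bigA _ (fun i k => xi (M i) (out i k) l * mu (P i k) l)) -mulr_natr.
  have := mixture_response_le card_Out lab_inj lab_in hequiv xi01 xi_sum xi_nc l ord0 out
            (fun i k => mu (P i k) l) (4 * nu l) (fun i k => mu_ge0 (P i k) l) (mu_P ^~ l).
  lra.
have F_ge0 (ik : 'I_9 * 'I_4) l : 0 <= xi (M ik.1) (out ik.1 ik.2) l * mu (P ik.1 ik.2) l.
  by rewrite mulr_ge0 //; case/andP: (xi01 (M ik.1) (out ik.1 ik.2) l).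
have := esum_sum_le_natmul F_ge0 (mu_ge0 _) (mu_sum _) pointwise.
under eq_bigr do rewrite p_model.
rewrite sumEFin lee_fin -(pair_bigA _ (fun i k => p (M i) (out i k) (P i k))).
lra.
Qed.
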